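(* Let $A$ be an associative algebra over a field $K$ with $A_0=\{0\}$. Then every weak multiplier of $A$ is a linear multiplier: $M(A)=M'(A)=LM(A)=LM'(A)$.
   Context: A map $T:A\to A$ (not assumed linear) is a weak multiplier if $xT(y)=T(x)y$ for all $x,y\in A$, and a multiplier if $xT(y)=T(xy)=T(x)y$ for all $x,y\in A$. $M(A)$, $M'(A)$ are the sets of multipliers and weak multipliers; $LM(A)$, $LM'(A)$ their subsets of $K$-linear maps. $A_0=\mathrm{Ann}_l(A)\cap\mathrm{Ann}_r(A)$ with $\mathrm{Ann}_l(A)=\{a: ax=0\ \forall x\}$, $\mathrm{Ann}_r(A)=\{a: xa=0\ \forall x\}$. *)

(* A (possibly non-unital) associative algebra over a field K
   is modelled as a K-vector space A (lmodType K) with a bilinear associative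
   multiplication mul : A -> A -> A. *)
From mathcomp Require Import all_boot all_order all_algebra.
Set Implicit Arguments. Unset Strict Implicit. Unset Printing Implicit Defensive.
Import GRing.Theory.
Local Open Scope ring_scope.

Definition assoc_algebra_mul (K : fieldType) (A : lmodType K) (mul : A -> A -> A) : Prop :=
  [/\ (forall x y z, mul x (mul y z) = mul (mul x y) z),
      (forall x y z, mul (x + y) z = mul x z + mul y z),
      (forall x y z, mul x (y + z) = mul x y + mul x z),
      (forall (k : K) x y, mul (k *: x) y = k *: mul x y)
    & (forall (k : K) x y, mul x (k *: y) = k *: mul x y)].

Definition ann_l (K : fieldType) (A : lmodType K) (mul : A -> A -> A) (a : A) : Prop :=
  forall x, mul a x = 0.
Definition ann_r (K : fieldType) (A : lmodType K) (mul : A -> A -> A) (a : A) : Prop :=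
  forall x, mul x a = 0.
Definition in_A0 (K : fieldType) (A : lmodType K) (mul : A -> A -> A) (a : A) : Prop :=
  ann_l mul a /\ ann_r mul a.

Definition weak_multiplier (K : fieldType) (A : lmodType K) (mul : A -> A -> A)
  (T : A -> A) : Prop :=
  forall x y, mul x (T y) = mul (T x) y.
Definition multiplier (K : fieldType) (A : lmodType K) (mul : A -> A -> A)
  (T : A -> A) : Prop :=
  forall x y, mul x (T y) = T (mul x y) /\ T (mul x y) = mul (T x) y.

Definition K_linear (K : fieldType) (A : lmodType K) (T : A -> A) : Prop :=
  (forall x y, T (x + y) = T x + T y) /\ (forall (k : K) x, T (k *: x) = k *: T x).

Definition lin_multiplier (K : fieldType) (A : lmodType K) (mul : A -> A -> A)
  (T : A -> A) : Prop := multiplier mul T /\ K_linear T.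
Definition lin_weak_multiplier (K : fieldType) (A : lmodType K) (mul : A -> A -> A)
  (T : A -> A) : Prop := weak_multiplier mul T /\ K_linear T.

(* The whole argument rests on one observation: when A_0 = 0, an element of A
   is determined by its left and right products with all elements of A
   ([mul_separates]).  For a weak multiplier T this gives a criterion for
   computing T u: it suffices to exhibit v whose products with every w agree
   with u (T w) on the left and (T w) u on the right ([weak_multiplier_eq]).
   Applying the criterion to v = (T x) y, T x + T y and k T x shows that a weak
   multiplier satisfies T (x y) = (T x) y and is K-linear.  Since every
   multiplier is trivially a weak multiplier, all four classes coincide. *)
From mathcomp Require Import all_boot all_order all_algebra.
Set Implicit Arguments. Unset Strict Implicit. Unset Printing Implicit Defensive.
Local Open Scope ring_scope.
Import GRing.Theory.

Lemma additive_sub {U V : zmodType} (f : U -> V) :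
  {morph f : x y / x + y} -> forall x y, f (x - y) = f x - f y.
Proof.
move=> fD x y.
have f0 : f 0 = 0 by apply: (addrI (f 0)); rewrite -fD !addr0.
have fN : f (- y) = - f y by apply: (addrI (f y)); rewrite -fD !subrr.
by rewrite fD fN.
Qed.

Section WeakMultipliers.
Variables (K : fieldType) (A : lmodType K) (mul : A -> A -> A).
Hypothesis Halg : assoc_algebra_mul mul.

Let mulA x y z : mul x (mul y z) = mul (mul x y) z.
Proof. by case: Halg. Qed.
Let mulDl x y z : mul (x + y) z = mul x z + mul y z.
Proof. by case: Halg. Qed.
Let mulDr x y z : mul x (y + z) = mul x y + mul x z.
Proof. by case: Halg. Qed.
Let mulZl (k : K) x y : mul (k *: x) y = k *: mul x y.
Proof. by case: Halg. Qed.
Let mulZr (k : K) x y : mul x (k *: y) = k *: mul x y.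
Proof. by case: Halg. Qed.

Lemma multiplier_weak (T : A -> A) : multiplier mul T -> weak_multiplier mul T.
Proof. by move=> MT x y; case: (MT x y) => -> ->. Qed.

Hypothesis HA0 : forall a : A, in_A0 mul a -> a = 0.

(* With A_0 = 0, elements with the same left and right products are equal:
   their difference lies in A_0. *)
Lemma mul_separates (u v : A) :
  (forall w, mul u w = mul v w) -> (forall w, mul w u = mul w v) -> u = v.
Proof.
move=> eq_l eq_r; apply/eqP; rewrite -subr_eq0; apply/eqP/HA0; split=> w.
- by rewrite (additive_sub (fun x y => mulDl x y w)) eq_l subrr.
- by rewrite (additive_sub (mulDr w)) eq_r subrr.
Qed.

Variable T : A -> A.
Hypothesis weakT : weak_multiplier mul T.

Lemma weak_multiplier_eq (u v : A) :
  (forall w, mul v w = mul u (T w)) -> (forall w, mul w v = mul (T w) u) ->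
  T u = v.
Proof. by move=> eq_l eq_r; apply: mul_separates => w; rewrite ?eq_l ?eq_r weakT. Qed.

Lemma weak_multiplier_mull (x y : A) : T (mul x y) = mul (T x) y.
Proof.
apply: weak_multiplier_eq => w.
- by rewrite -weakT -mulA -weakT mulA.
- by rewrite mulA weakT mulA.
Qed.

Lemma weak_multiplier_multiplier : multiplier mul T.
Proof. by move=> x y; rewrite weak_multiplier_mull weakT. Qed.

Lemma weak_multiplier_linear : K_linear T.
Proof.
split=> [x y | k x]; apply: weak_multiplier_eq => w.
- by rewrite mulDl -!weakT mulDl.
- by rewrite mulDr !weakT mulDr.
- by rewrite mulZl -!weakT mulZl.
- by rewrite mulZr !weakT mulZr.
Qed.

End WeakMultipliers.

Theorem proposition5p1 (K : fieldType) (A : lmodType K) (mul : A -> A -> A)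
  (Halg : assoc_algebra_mul mul)
  (HA0 : forall a : A, in_A0 mul a -> a = 0) :
  forall T : A -> A,
    (multiplier mul T <-> weak_multiplier mul T) /\
    (weak_multiplier mul T <-> lin_multiplier mul T) /\
    (lin_multiplier mul T <-> lin_weak_multiplier mul T).
Proof.
move=> T.
have weak_lin : weak_multiplier mul T -> lin_multiplier mul T.
  by move=> W; split; [exact: (weak_multiplier_multiplier Halg HA0 W)
                    | exact: (weak_multiplier_linear Halg HA0 W)].
split; first by split=> [/multiplier_weak | /weak_lin []].
split; first by split=> [// | [/multiplier_weak]].
by split=> [[/multiplier_weak] | [/weak_lin]].
Qed.
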